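(* (i) For each $n$, $\mathcal{T}_n$ is a transparent spread, and if $n>0$ then $\mathcal{I}(\mathcal{T}_n)=\{\alpha\in\mathcal{T}_n\mid\exists p[\alpha(p)+1=n]\}$ and $\mathcal{L}(\mathcal{T}_n)=\mathcal{T}_{n-1}$. (ii) For all $n$ and all $m>0$, $\mathcal{T}_n=\{\alpha\in\mathcal{T}_{n+m}\mid(\mathcal{T}_{n+m},=)\models\bigwedge_{i<m}\neg D_i[\alpha]\}$. (iii) For all $m$, $\{\underline{0}\}=\mathcal{T}_1=\{\alpha\in\mathcal{T}_{m+1}\mid(\mathcal{T}_{m+1},=)\models\bigwedge_{i<m}\neg D_i[\alpha]\}$. (iv) For all $n>0$ and $m>0$, $(\mathcal{T}_n,=)\models\psi_m$ if and only if $m+1\le n$. (v) For all $n>0$ and $m>0$, $(\mathcal{T}_n,=)\models\rho_m$ if and only if $m+1=n$.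
   Context: Intuitionistic mathematics (constructive reading of logical constants; Markov's Principle not assumed), with Brouwer's Continuity Principle as an axiom (for every $R\subseteq\mathcal{N}\times\omega$, if $\forall\alpha\exists n[\alpha Rn]$ then $\forall\alpha\exists m\exists n\forall\beta[\overline{\alpha}m\sqsubset\beta\rightarrow\beta Rn]$). $\mathcal{N}=\omega^\omega$; $\overline{\alpha}n=\langle\alpha(0),\dots,\alpha(n-1)\rangle$; $s\sqsubset\alpha$: $s$ is an initial segment of $\alpha$; $\alpha\perp\delta$ iff $\exists n[\alpha(n)\neq\delta(n)]$. $\mathcal{F}_\beta:=\{\alpha\mid\forall n[\beta(\overline{\alpha}n)=0]\}$; $Spr(\beta)$ iff $\forall s[\beta(s)=0\leftrightarrow\exists n[\beta(s\ast\langle n\rangle)=0]]$. $\mathcal{T}_n:=\{\alpha\mid\forall i[\alpha(i)\le\alpha(i+1)<n]\}$ (a spread; $\mathcal{T}_0=\emptyset$, $\mathcal{T}_1=\{\underline{0}\}$). For a spread $\mathcal{F}$: $\alpha\in\mathcal{F}$ is isolated iff $\exists n\forall\gamma\in\mathcal{F}[\overline{\alpha}n\sqsubset\gamma\rightarrow\alpha=\gamma]$, $\mathcal{I}(\mathcal{F})$ is the set of isolated points; $\alpha\in\mathcal{F}$ is a limit point iff $\forall n\exists\delta\in\mathcal{F}[\overline{\alpha}n\sqsubset\delta\wedge\alpha\perp\delta]$, $\mathcal{L}(\mathcal{F})$ is the set of limit points. For $Spr(\beta)$, $\mathcal{F}_\beta$ is transparent iff there is $\gamma$ with $Spr(\gamma)$,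 $\mathcal{F}_\gamma=\mathcal{L}(\mathcal{F}_\beta)$ and $\forall\alpha\in\mathcal{F}_\beta[\exists n[\gamma(\overline{\alpha}n)\neq0]\rightarrow\alpha\in\mathcal{I}(\mathcal{F}_\beta)]$. Formulas (language with only $=$): $D_0(\mathsf{x}):=\forall\mathsf{y}[\mathsf{x}=\mathsf{y}\vee\neg(\mathsf{x}=\mathsf{y})]$ and, for $m>0$, $D_m(\mathsf{x}):=\bigwedge_{i<m}\neg D_i(\mathsf{x})\wedge\forall\mathsf{y}[\bigwedge_{i<m}\neg D_i(\mathsf{y})\rightarrow(\mathsf{x}=\mathsf{y}\vee\neg(\mathsf{x}=\mathsf{y}))]$; for $m>0$, $\psi_m:=\exists\mathsf{x}[D_m(\mathsf{x})]$ and $\rho_m:=\exists\mathsf{x}[D_m(\mathsf{x})\wedge\forall\mathsf{y}[D_m(\mathsf{y})\rightarrow\mathsf{y}=\mathsf{x}]]$. An empty conjunction is true. Satisfaction is read intuitionistically, $=$ interpreted as equality of sequences. *)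

From Stdlib Require Import List Arith.
Import ListNotations.

(* Baire space N = omega^omega; finite sequences are coded as lists. *)
Definition Seq := nat -> nat.

Definition eqs (a b : Seq) : Prop := forall n, a n = b n.

Definition apart (a d : Seq) : Prop := exists n, a n <> d n.

Definition zero_seq : Seq := fun _ => 0.

Fixpoint prefix (a : Seq) (n : nat) : list nat :=
  match n with
  | 0 => []
  | S k => prefix a k ++ [a k]
  end.

Definition initseg (s : list nat) (a : Seq) : Prop := s = prefix a (length s).

Definition BCP : Prop :=
  forall R : Seq -> nat -> Prop,
    (forall a, exists n, R a n) ->
    forall a, exists m n, forall b, initseg (prefix a m) b -> R b n.

Definition Fb (beta : list nat -> nat) (a : Seq) : Prop :=
  forall n, beta (prefix a n) = 0.

Definition Spr (beta : list nat -> nat) : Prop :=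
  forall s, beta s = 0 <-> exists n, beta (s ++ [n]) = 0.

Definition T (n : nat) (a : Seq) : Prop :=
  forall i, a i <= a (S i) /\ a (S i) < n.

Definition Isol (F : Seq -> Prop) (a : Seq) : Prop :=
  F a /\ exists n, forall g, F g -> initseg (prefix a n) g -> eqs a g.

Definition Lim (F : Seq -> Prop) (a : Seq) : Prop :=
  F a /\ forall n, exists d, F d /\ initseg (prefix a n) d /\ apart a d.

Definition IsSpread (F : Seq -> Prop) : Prop :=
  exists beta, Spr beta /\ forall a, Fb beta a <-> F a.

Definition Transparent (F : Seq -> Prop) : Prop :=
  exists gamma, Spr gamma /\ (forall a, Fb gamma a <-> Lim F a) /\
    forall a, F a -> (exists n, gamma (prefix a n) <> 0) -> Isol F a.

(* Satisfaction in the structure (X, =), X a set of sequences.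
   ND X m x  =  /\_{i<m} ~ D_i(x)   (empty conjunction = True) *)
Definition decEq (x y : Seq) : Prop := eqs x y \/ ~ eqs x y.

Fixpoint ND (X : Seq -> Prop) (m : nat) (x : Seq) : Prop :=
  match m with
  | 0 => True
  | S k => ND X k x /\
           ~ (match k with
              | 0 => forall y, X y -> decEq x y
              | S _ => ND X k x /\ forall y, X y -> ND X k y -> decEq x y
              end)
  end.

Definition D (X : Seq -> Prop) (m : nat) (x : Seq) : Prop :=
  match m with
  | 0 => forall y, X y -> decEq x y
  | S _ => ND X m x /\ forall y, X y -> ND X m y -> decEq x y
  end.

Definition psi (X : Seq -> Prop) (m : nat) : Prop :=
  exists x, X x /\ D X m x.

Definition rho (X : Seq -> Prop) (m : nat) : Prop :=
  exists x, X x /\ D X m x /\ forall y, X y -> D X m y -> eqs y x.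

From Stdlib Require Import List Arith Lia Bool.
Import ListNotations.

(* A point of [T n] that reaches the top value [n - 1] stays there, so it is
   isolated and equality with it is decidable; the points that never reach the
   top form [T (n - 1)], and they are the limit points.  By continuity no point
   of [T (n - 1)] has decidable equality in [T n]: it is the limit of points
   that jump to the top at an arbitrarily late moment.  So [~ D_0] cuts [T n]
   down to [T (n - 1)], and inductively [/\_{i<k} ~ D_i] defines [T (n - k)]
   inside [T n], while [D_k] picks out the points of [T (n - k)] that reach its
   top.  Such a point exists iff [k < n], and it is unique iff [n - k = 1]. *)

Lemma T_pos n a : T n a -> 0 < n.
Proof. intros H. specialize (H 0). lia. Qed.

Lemma T_lt n a : T n a -> forall i, a i < n.
Proof. intros H [|i]; [specialize (H 0) | specialize (H i)]; lia. Qed.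

Lemma T_weaken n n' a : T n a -> n <= n' -> T n' a.
Proof. intros H Hn i. specialize (H i). lia. Qed.

Lemma T_const c n : c < n -> T n (fun _ => c).
Proof. intros H i. lia. Qed.

Lemma T_1_iff_zero a : T 1 a <-> eqs a zero_seq.
Proof.
  split.
  - intros H i. pose proof (T_lt _ _ H i). unfold zero_seq. lia.
  - intros E i. rewrite (E i), (E (S i)). unfold zero_seq. lia.
Qed.

Lemma length_prefix a m : length (prefix a m) = m.
Proof. induction m; simpl; [reflexivity|]. rewrite length_app, IHm; simpl; lia. Qed.

Lemma prefix_eq_iff a b m : prefix a m = prefix b m <-> forall k, k < m -> a k = b k.
Proof.
  induction m as [|m IH]; simpl.
  - split; [intros _ k Hk; lia | reflexivity].
  - split.
    + intros E k Hk. apply app_inj_tail in E as [E Em].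
      destruct (Nat.eq_dec k m); [subst; congruence|]. apply IH; [exact E | lia].
    + intros H. rewrite (proj2 IH) by (intros; apply H; lia).
      rewrite H by lia. reflexivity.
Qed.

Lemma initseg_prefix_iff a b m : initseg (prefix a m) b <-> forall k, k < m -> a k = b k.
Proof. unfold initseg. rewrite length_prefix. apply prefix_eq_iff. Qed.

Lemma agree_or_apart x y p : (forall k, k < p -> x k = y k) \/ apart x y.
Proof.
  induction p as [|p [H|H]].
  - left. intros k Hk. lia.
  - destruct (Nat.eq_dec (x p) (y p)) as [E|E].
    + left. intros k Hk. destruct (Nat.eq_dec k p); [subst; exact E | apply H; lia].
    + right. exists p. exact E.
  - right. exact H.
Qed.

(* [below_desc c (rev s)] holds iff [s] is nondecreasing with entries below [c]
   and [0 < c], i.e. iff [s] extends to a point of [T c]; reading [s] backwards,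
   each entry [x] bounds the entry before it by [S x]. *)
Fixpoint below_desc (c : nat) (r : list nat) : bool :=
  match r with
  | [] => 0 <? c
  | x :: t => (x <? c) && below_desc (S x) t
  end.

Definition T_beta (n : nat) (s : list nat) : nat :=
  if below_desc n (rev s) then 0 else 1.

Lemma T_beta_eq_0 n s : T_beta n s = 0 <-> below_desc n (rev s) = true.
Proof. unfold T_beta. destruct (below_desc n (rev s)); split; congruence. Qed.

Lemma below_desc_pos c r : below_desc c r = true -> 0 < c.
Proof.
  destruct r as [|x t]; simpl.
  - apply Nat.ltb_lt.
  - rewrite andb_true_iff, Nat.ltb_lt. lia.
Qed.

Lemma below_desc_mono c c' r : c <= c' -> below_desc c r = true -> below_desc c' r = true.
Proof.
  destruct r as [|x t]; simpl; rewrite ?andb_true_iff, !Nat.ltb_lt; intuition lia.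
Qed.

Lemma rev_prefix_S a m : rev (prefix a (S m)) = a m :: rev (prefix a m).
Proof. apply rev_unit. Qed.

Lemma Spr_T_beta n : Spr (T_beta n).
Proof.
  intros s. rewrite T_beta_eq_0. split.
  - intros E. pose proof (below_desc_pos _ _ E).
    exists (n - 1). apply T_beta_eq_0. rewrite rev_unit. simpl.
    replace (S (n - 1)) with n by lia. rewrite E, andb_true_r.
    apply Nat.ltb_lt. lia.
  - intros [k Hk]. apply T_beta_eq_0 in Hk. rewrite rev_unit in Hk. simpl in Hk.
    apply andb_true_iff in Hk as [Hk E]. apply Nat.ltb_lt in Hk.
    exact (below_desc_mono (S k) n _ Hk E).
Qed.

Lemma below_desc_prefix a m c : (forall i, a i <= a (S i)) -> a m < c ->
  below_desc c (rev (prefix a (S m))) = true.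
Proof.
  intros Ha. revert c. induction m as [|m IH]; intros c Hc;
    rewrite rev_prefix_S; simpl; apply andb_true_iff; rewrite Nat.ltb_lt;
    split; try assumption.
  - apply Nat.ltb_lt. lia.
  - apply IH. specialize (Ha m). lia.
Qed.

Lemma Fb_T_beta n a : Fb (T_beta n) a <-> T n a.
Proof.
  unfold Fb. setoid_rewrite T_beta_eq_0. split.
  - intros H i. specialize (H (S (S i))). rewrite !rev_prefix_S in H. simpl in H.
    rewrite !andb_true_iff, !Nat.ltb_lt in H. lia.
  - intros H [|m].
    + apply Nat.ltb_lt, (T_pos _ _ H).
    + apply below_desc_prefix; [apply H | apply (T_lt _ _ H)].
Qed.

Lemma IsSpread_T n : IsSpread (T n).
Proof. exists (T_beta n). split; [apply Spr_T_beta | apply Fb_T_beta]. Qed.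

Lemma T_top_stable n a p j : T n a -> a p + 1 = n -> p <= j -> a j + 1 = n.
Proof.
  intros H Hp Hj. induction Hj as [|j _ IH]; [exact Hp|].
  specialize (H j). lia.
Qed.

Lemma T_eq_of_top n a g p : T n a -> T n g -> a p + 1 = n ->
  (forall k, k < S p -> a k = g k) -> eqs a g.
Proof.
  intros Ha Hg Hp Hk j. destruct (le_lt_dec j p); [apply Hk; lia|].
  assert (Hgp : g p + 1 = n) by (rewrite <- Hk by lia; exact Hp).
  pose proof (T_top_stable _ _ _ j Ha Hp). pose proof (T_top_stable _ _ _ j Hg Hgp). lia.
Qed.

Lemma D0_of_top n x p : T n x -> x p + 1 = n -> D (T n) 0 x.
Proof.
  intros Hx Hp y Hy. destruct (agree_or_apart x y (S p)) as [A | [k Hk]].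
  - left. exact (T_eq_of_top _ _ _ _ Hx Hy Hp A).
  - right. intros E. exact (Hk (E k)).
Qed.

Definition switch_to_top (keep : nat -> bool) (x : Seq) (M : nat) : Seq :=
  fun j => if keep j then x j else M - 1.

Lemma T_switch_to_top M x keep : T M x ->
  (forall j, keep (S j) = true -> keep j = true) -> T M (switch_to_top keep x M).
Proof.
  intros H Hkeep i. pose proof (T_lt _ _ H i). pose proof (T_lt _ _ H (S i)).
  unfold switch_to_top.
  destruct (keep (S i)) eqn:E.
  - rewrite (Hkeep i E). apply H.
  - destruct (keep i); lia.
Qed.

Lemma T_switch_to_top_at M x m : T M x -> T M (switch_to_top (fun j => j <? m) x M).
Proof.
  intros H. apply T_switch_to_top; [exact H|].
  intros j. rewrite !Nat.ltb_lt. lia.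
Qed.

Lemma switch_to_top_at_below x M m k : k < m -> switch_to_top (fun j => j <? m) x M k = x k.
Proof. intros Hk. unfold switch_to_top. rewrite (proj2 (Nat.ltb_lt k m) Hk). reflexivity. Qed.

Lemma switch_to_top_at_self x M m : switch_to_top (fun j => j <? m) x M m = M - 1.
Proof. unfold switch_to_top. rewrite Nat.ltb_irrefl. reflexivity. Qed.

Lemma Isol_T_iff n a : Isol (T n) a <-> T n a /\ exists p, a p + 1 = n.
Proof.
  split.
  - intros [H [m Hm]]. split; [exact H|]. exists m.
    assert (E : eqs a (switch_to_top (fun j => j <? m) a n)).
    { apply Hm; [apply T_switch_to_top_at; exact H|].
      apply initseg_prefix_iff. intros k Hk. symmetry. apply switch_to_top_at_below, Hk. }
    specialize (E m). rewrite switch_to_top_at_self in E.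
    pose proof (T_pos _ _ H). lia.
  - intros [H [p Hp]]. split; [exact H|]. exists (S p). intros g Hg Hag.
    rewrite initseg_prefix_iff in Hag. exact (T_eq_of_top _ _ _ _ H Hg Hp Hag).
Qed.

Lemma Lim_T_iff n a : Lim (T n) a <-> T (n - 1) a.
Proof.
  split.
  - intros [H HL] i. split; [apply H|].
    pose proof (T_lt _ _ H (S i)).
    destruct (Nat.eq_dec (a (S i) + 1) n) as [Htop|]; [exfalso|lia].
    destruct (HL (S (S i))) as [d [Hd [Had [k Hk]]]].
    rewrite initseg_prefix_iff in Had. exact (Hk (T_eq_of_top _ _ _ _ H Hd Htop Had k)).
  - intros H. pose proof (T_pos _ _ H).
    assert (Hn : T n a) by (apply (T_weaken _ _ _ H); lia).
    split; [exact Hn|]. intros m. exists (switch_to_top (fun j => j <? m) a n).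
    split; [apply T_switch_to_top_at; exact Hn|]. split.
    + apply initseg_prefix_iff. intros k Hk. symmetry. apply switch_to_top_at_below, Hk.
    + exists m. rewrite switch_to_top_at_self. pose proof (T_lt _ _ H m). lia.
Qed.

Lemma T_top_of_T_beta_pred n a m : T n a -> T_beta (n - 1) (prefix a m) <> 0 ->
  exists p, a p + 1 = n.
Proof.
  intros H Hm. pose proof (T_lt _ _ H) as Hlt. rewrite T_beta_eq_0 in Hm.
  destruct m as [|m].
  - exists 0. simpl in Hm. rewrite Nat.ltb_lt in Hm. specialize (Hlt 0). lia.
  - exists m. destruct (lt_dec (a m) (n - 1)) as [Hm1|]; [|specialize (Hlt m); lia].
    exfalso. apply Hm, below_desc_prefix; [apply H | exact Hm1].
Qed.

Lemma Transparent_T n : Transparent (T n).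
Proof.
  exists (T_beta (n - 1)). split; [apply Spr_T_beta|]. split.
  - intros a. rewrite Fb_T_beta, Lim_T_iff. reflexivity.
  - intros a H [m Hm]. apply Isol_T_iff. split; [exact H|].
    exact (T_top_of_T_beta_pred _ _ _ H Hm).
Qed.

Lemma T_pred_of_not_D0 M x : T M x -> ~ D (T M) 0 x -> T (M - 1) x.
Proof.
  intros H HN i. split; [apply H|]. pose proof (T_lt _ _ H (S i)).
  destruct (Nat.eq_dec (x (S i) + 1) M) as [Htop|]; [|lia].
  exfalso. exact (HN (D0_of_top _ _ _ H Htop)).
Qed.

Lemma ND_S X k x : ND X (S k) x <-> ND X k x /\ ~ D X k x.
Proof. destruct k; reflexivity. Qed.

Lemma D_iff_ND X k x : D X k x <-> ND X k x /\ forall y, X y -> ND X k y -> decEq x y.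
Proof. destruct k; simpl; firstorder. Qed.

Lemma D_of_ND_equiv (X Y : Seq -> Prop) k :
  (forall y, Y y -> X y) -> (forall y, X y -> (ND X k y <-> Y y)) ->
  forall x, X x -> (D X k x <-> Y x /\ D Y 0 x).
Proof.
  intros HYX HND x Hx. rewrite D_iff_ND, HND by exact Hx. split.
  - intros [Hy Hdec]. split; [exact Hy|]. intros y Hy'.
    apply Hdec; [apply HYX | apply HND; [apply HYX|]]; exact Hy'.
  - intros [Hy Hdec]. split; [exact Hy|]. intros y HXy HNDy.
    apply Hdec. apply HND; assumption.
Qed.

Section Continuity.

Hypothesis bcp : BCP.

(* Deciding [x = f b] for all [b] would give, by continuity at [zero_seq], a
   neighbourhood of [zero_seq] on which [x = f b]. *)
Lemma not_D0_of_path (X : Seq -> Prop) x (f : Seq -> Seq) :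
  (forall b, X (f b)) -> eqs x (f zero_seq) ->
  (forall m, exists b, initseg (prefix zero_seq m) b /\ ~ eqs x (f b)) ->
  ~ D X 0 x.
Proof.
  intros HX Hf0 Hfar Hdec.
  pose (R := fun b k => k = 0 <-> eqs x (f b)).
  assert (HR : forall b, exists k, R b k).
  { intros b. destruct (Hdec (f b) (HX b)) as [E|E].
    - exists 0. split; [intros _; exact E | reflexivity].
    - exists 1. split; [discriminate | intros E'; contradiction]. }
  destruct (bcp R HR zero_seq) as [m [k Hm]].
  assert (Hk : k = 0) by (apply (Hm zero_seq); [apply initseg_prefix_iff; auto | exact Hf0]).
  destruct (Hfar m) as [b [Hb Hfb]]. exact (Hfb (proj1 (Hm b Hb) Hk)).
Qed.

Fixpoint zero_upto (b : Seq) (j : nat) : bool :=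
  match j with
  | 0 => b 0 =? 0
  | S j' => zero_upto b j' && (b (S j') =? 0)
  end.

Lemma zero_upto_zero j : zero_upto zero_seq j = true.
Proof. induction j as [|j IH]; simpl; [reflexivity|]. rewrite IH. reflexivity. Qed.

Lemma zero_upto_false b j : b j <> 0 -> zero_upto b j = false.
Proof.
  intros H. apply Nat.eqb_neq in H. destruct j; simpl; rewrite H; [reflexivity|].
  apply andb_false_r.
Qed.

Lemma not_D0_of_T_pred M x : T (M - 1) x -> ~ D (T M) 0 x.
Proof.
  intros H. pose proof (T_pos _ _ H).
  assert (HM : T M x) by (apply (T_weaken _ _ _ H); lia).
  apply (not_D0_of_path _ _ (fun b => switch_to_top (zero_upto b) x M)).
  - intros b. apply T_switch_to_top; [exact HM|].
    intros j. simpl. rewrite andb_true_iff. tauto.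
  - intros j. unfold switch_to_top. rewrite zero_upto_zero. reflexivity.
  - intros m. exists (fun k => if k =? m then 1 else 0). split.
    + apply initseg_prefix_iff. intros k Hk.
      rewrite (proj2 (Nat.eqb_neq k m)) by lia. reflexivity.
    + intros E. specialize (E m). unfold switch_to_top in E.
      rewrite zero_upto_false in E by (rewrite Nat.eqb_refl; discriminate).
      pose proof (T_lt _ _ H m). lia.
Qed.

Lemma ND_T N k x : T N x -> (ND (T N) k x <-> T (N - k) x).
Proof.
  revert x. induction k as [|k IH]; intros x Hx.
  - rewrite Nat.sub_0_r. simpl. tauto.
  - assert (HD : D (T N) k x <-> T (N - k) x /\ D (T (N - k)) 0 x).
    { apply D_of_ND_equiv; [intros y Hy; apply (T_weaken _ _ _ Hy); lia | exact IH | exact Hx]. }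
    rewrite ND_S, HD, IH by exact Hx. replace (N - S k) with (N - k - 1) by lia.
    split.
    + intros [Hk HN]. apply T_pred_of_not_D0; [exact Hk|]. tauto.
    + intros Hk1. pose proof (T_pos _ _ Hk1).
      assert (Hk : T (N - k) x) by (apply (T_weaken _ _ _ Hk1); lia).
      split; [exact Hk|]. intros [_ HD0]. exact (not_D0_of_T_pred _ _ Hk1 HD0).
Qed.

Lemma D_T N k x : T N x -> (D (T N) k x <-> T (N - k) x /\ D (T (N - k)) 0 x).
Proof.
  apply D_of_ND_equiv; [intros y Hy; apply (T_weaken _ _ _ Hy); lia|].
  intros y. apply ND_T.
Qed.

Lemma T_iff_ND n m a : T n a <-> T (n + m) a /\ ND (T (n + m)) m a.
Proof.
  split.
  - intros H. assert (Hnm : T (n + m) a) by (apply (T_weaken _ _ _ H); lia).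
    split; [exact Hnm|]. apply (ND_T _ _ _ Hnm). rewrite Nat.add_sub. exact H.
  - intros [Hnm HND]. apply (ND_T _ _ _ Hnm) in HND. rewrite Nat.add_sub in HND. exact HND.
Qed.

Lemma D_T_const n m : m < n -> D (T n) m (fun _ => n - m - 1).
Proof.
  intros H. apply D_T; [apply T_const; lia|].
  split; [apply T_const; lia|]. apply (D0_of_top _ _ 0); [apply T_const|]; lia.
Qed.

Lemma psi_T n m : psi (T n) m <-> m + 1 <= n.
Proof.
  split.
  - intros [x [Hx HD]]. apply (D_T _ _ _ Hx) in HD as [H _].
    pose proof (T_pos _ _ H). lia.
  - intros H. exists (fun _ => n - m - 1). split; [apply T_const; lia|].
    apply D_T_const. lia.
Qed.

Lemma rho_T n m : rho (T n) m <-> m + 1 = n.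
Proof.
  split.
  - intros [x [Hx [HD Huniq]]]. apply (D_T _ _ _ Hx) in HD as [H _].
    pose proof (T_pos _ _ H).
    destruct (Nat.eq_dec (m + 1) n) as [|Hne]; [assumption | exfalso].
    pose (y := switch_to_top (fun j => j <? 1) (fun _ => n - m - 2) (n - m)).
    assert (Hy : T (n - m) y) by (apply T_switch_to_top_at, T_const; lia).
    assert (Ey : eqs y x).
    { apply Huniq; [apply (T_weaken _ _ _ Hy); lia|].
      apply D_T; [apply (T_weaken _ _ _ Hy); lia|].
      split; [exact Hy|]. apply (D0_of_top _ _ 1); [exact Hy|].
      unfold y. rewrite switch_to_top_at_self. lia. }
    assert (Ec : eqs (fun _ => n - m - 1) x).
    { apply Huniq; [apply T_const | apply D_T_const]; lia. }
    specialize (Ey 0). specialize (Ec 0). cbn in Ey, Ec. lia.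
  - intros H. exists (fun _ => n - m - 1).
    split; [apply T_const; lia|]. split; [apply D_T_const; lia|].
    intros y Hy HD. apply (D_T _ _ _ Hy) in HD as [H1 _].
    replace (n - m) with 1 in H1 by lia. intros k. apply T_1_iff_zero in H1.
    rewrite (H1 k). unfold zero_seq. lia.
Qed.

End Continuity.

Theorem theorem7p7 (bcp : BCP) :
  (* (i) *)
  (forall n : nat,
     IsSpread (T n) /\ Transparent (T n) /\
     (0 < n ->
        (forall a, Isol (T n) a <-> (T n a /\ exists p, a p + 1 = n)) /\
        (forall a, Lim (T n) a <-> T (n - 1) a))) /\
  (* (ii) *)
  (forall n m : nat, 0 < m ->
     forall a, T n a <-> (T (n + m) a /\ ND (T (n + m)) m a)) /\
  (* (iii) *)
  (forall m : nat,
     (forall a, eqs a zero_seq <-> T 1 a) /\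
     (forall a, T 1 a <-> (T (m + 1) a /\ ND (T (m + 1)) m a))) /\
  (* (iv) *)
  (forall n m : nat, 0 < n -> 0 < m -> (psi (T n) m <-> m + 1 <= n)) /\
  (* (v) *)
  (forall n m : nat, 0 < n -> 0 < m -> (rho (T n) m <-> m + 1 = n)).
Proof.
  split; [|split; [|split; [|split]]].
  - intros n. split; [apply IsSpread_T|]. split; [apply Transparent_T|].
    intros _. split; intros a; [apply Isol_T_iff | apply Lim_T_iff].
  - intros n m _ a. apply (T_iff_ND bcp).
  - intros m. split; intros a; [symmetry; apply T_1_iff_zero|].
    rewrite Nat.add_comm. apply (T_iff_ND bcp).
  - intros n m _ _. apply (psi_T bcp).
  - intros n m _ _. apply (rho_T bcp).
Qed.
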